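(* Let $I$ be an ideal of $\mathbb{R}_{max}[x_1,\dots,x_n]$. Then the coordinate-wise symmetrization map $\varphi=s^n:(\mathbb{R}_{max})^n\longrightarrow (s(\mathbb{R}_{max}))^n$ induces a set bijection \[trop(V(I)):= \bigcap_{f\in I} trop(V(f)) \simeq \Big(\bigcap_{f\in I}HV(f)\Big) \bigcap \operatorname{Im}\varphi.\]
   Context: Let $M=\mathbb{R}_{max}=(\mathbb{R}\cup\{-\infty\},\max,+)$ be the tropical semifield (addition is $\max$, multiplication is the usual addition of reals), totally ordered by the usual order. Its symmetrization is $R=s(M)=\{(a,1),(a,-1)\mid a\in M\setminus\{-\infty\}\}\cup\{0\}$, where $0=(-\infty,1)=(-\infty,-1)$; write $(a,1)=a$, $(a,-1)=-a$, $|(a,\pm1)|=a$. The hyperaddition on $R$ is: $x+y=\{x\}$ if $|x|>|y|$ or $x=y$; $x+y=\{y\}$ if $|x|<|y|$; and $x+(-x)=\{(t,\pm1)\mid t\le |x|\}$. Multiplication is component-wise, $(a,p)(b,q)=(a+b,pq)$. With these operations $R$ is a hyperfield. Let $s:M\to R$, $a\mapsto (a,1)$, and $\varphi=s^n:M^n\to R^n$ coordinate-wise; $\varphi$ is injective. For a polynomial $g=\sum_I a_I X^I$ over the hyperfield $R$ (no repeated monomials) and $\alpha\in R^n$, the evaluation $g(\alpha)=\sum_I a_I\alpha^I$ is a subset of $R$. For $f\in M[x_1,\dots,x_n]$, fix a presentation $f=\sum_i m_i$ as a sum of distinct monomials, and set $\tilde f_{\hat i}:=\sum_{j\neq i}(m_j,1)+(m_i,-1)\in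 R[x_1,\dots,x_n]$ (identifying coefficients $a\in M$ with $(a,1)\in R$), $V(\tilde f_{\hat i}):=\{z\in R^n\mid 0\in \tilde f_{\hat i}(z)\}$, and $HV(f):=\bigcup_i V(\tilde f_{\hat i})$. The tropical hypersurface $trop(V(f))$ is the set of $a\in M^n$ (coordinates equal to $-\infty$ allowed) at which the maximum among the values of the monomials of $f$ is attained at least twice. It was shown earlier that $\varphi$ restricts to a bijection $trop(V(f))\simeq HV(f)\cap\operatorname{Im}\varphi$ for each single $f$. *)

From Stdlib Require Import Reals.
From mathcomp Require Import all_boot.

Set Implicit Arguments.
Unset Strict Implicit.
Unset Printing Implicit Defensive.

(* None encodes -oo.                                                  *)
Definition M := option R.

Definition tadd (x y : M) : M :=
  match x, y with
  | None, _ => y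
  | _, None => x
  | Some a, Some b => Some (Rmax a b)
  end.

Definition tmul (x y : M) : M :=
  match x, y with
  | Some a, Some b => Some (Rplus a b)
  | _, _ => None
  end.

Definition tone : M := Some R0.

Definition tle (x y : M) : Prop :=
  match x, y with
  | None, _ => True
  | Some _, None => False
  | Some a, Some b => Rle a b
  end.

Definition tlt (x y : M) : Prop :=
  match x, y with
  | None, Some _ => True
  | Some a, Some b => Rlt a b
  | _, _ => False
  end.

(* x ^ k in M (so x ^ 0 = 1_M even for x = -oo) *)
Definition tpow (x : M) (k : nat) : M := iter k (tmul x) tone.

(* An exponent is a vector in N^n; a polynomial is a finitely         *)
(* supported coefficient function (coefficient -oo = absent monomial). *)
Definition expo (n : nat) := {ffun 'I_n -> nat}.

Definition tpoly (n : nat) := expo n -> M.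

Definition finsupp n (f : tpoly n) : Prop :=
  exists s : seq (expo n), forall e, f e <> None -> e \in s.

Definition tpzero n : tpoly n := fun _ => None.

Definition tpadd n (f g : tpoly n) : tpoly n := fun e => tadd (f e) (g e).

(* product: coefficient of x^K is  max_{I + J = K} g_I + f_J ;
   I ranges over the exponents componentwise <= K *)
Definition tpmul n (g f : tpoly n) : tpoly n := fun K =>
  \big[tadd/None]_(I : {ffun 'I_n -> 'I_((\max_(i < n) K i).+1)}
                   | [forall i, (I i <= K i)%N])
     tmul (g [ffun i => nat_of_ord (I i)]) (f [ffun i => (K i - I i)%N]).

Record is_ideal n (I : tpoly n -> Prop) : Prop := {
  ideal_poly : forall f, I f -> finsupp f;
  ideal_zero : I (@tpzero n);
  ideal_add  : forall f g, I f -> I g -> I (tpadd f g);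
  ideal_mul  : forall f g, I f -> finsupp g -> I (tpmul g f)
}.

Definition tmono n (a : 'I_n -> M) (e : expo n) : M :=
  \big[tmul/tone]_(i < n) tpow (a i) (e i).

Definition tval n (f : tpoly n) (a : 'I_n -> M) (e : expo n) : M :=
  tmul (f e) (tmono a e).

(* tropical hypersurface trop(V(f)): the maximum of the values of the
   monomials of f is attained at least twice (or the maximum is -oo,
   i.e. f(a) = -oo) *)
Definition tropV n (f : tpoly n) (a : 'I_n -> M) : Prop :=
  (forall e, f e <> None -> tval f a e = None) \/
  exists e1 e2, e1 <> e2 /\ f e1 <> None /\ f e2 <> None /\
    tval f a e1 = tval f a e2 /\
    forall e, f e <> None -> tle (tval f a e) (tval f a e1).

(* S0 = 0 = (-oo, +-1);  Sg a true = (a, 1);  Sg a false = (a, -1).   *)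
Inductive sym : Type :=
| S0 : sym
| Sg : R -> bool -> sym.

Definition sabs (x : sym) : M :=
  match x with S0 => None | Sg a _ => Some a end.

Definition sneg (x : sym) : sym :=
  match x with S0 => S0 | Sg a p => Sg a (~~ p) end.

Definition smul (x y : sym) : sym :=
  match x, y with
  | Sg a p, Sg b q => Sg (Rplus a b) (p == q)
  | _, _ => S0
  end.

Definition sone : sym := Sg R0 true.

Definition spow (x : sym) (k : nat) : sym := iter k (smul x) sone.

(* hyperaddition: hadd x y is the subset x + y of s(M) *)
Definition hadd (x y : sym) (z : sym) : Prop :=
  ((tlt (sabs y) (sabs x) \/ x = y) /\ z = x) \/
  (tlt (sabs x) (sabs y) /\ z = y) \/
  (y = sneg x /\ tle (sabs z) (sabs x)).

Fixpoint hsum (l : seq sym) : sym -> Prop :=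
  match l with
  | [::] => fun z => z = S0
  | x :: l' => fun z => exists w, hsum l' w /\ hadd x w z
  end.

Definition sM (x : M) : sym :=
  match x with None => S0 | Some a => Sg a true end.

Definition phi n (a : 'I_n -> M) : 'I_n -> sym := fun i => sM (a i).

Definition smono n (z : 'I_n -> sym) (e : expo n) : sym :=
  \big[smul/sone]_(i < n) spow (z i) (e i).

Definition presentation n (f : tpoly n) (s : seq (expo n)) : Prop :=
  uniq s /\ forall e, e \in s <-> f e <> None.

(* evaluation of f~_{\hat i} (the sign of the monomial x^ei flipped)
   at z, a subset of s(M) *)
Definition ftilde_eval n (f : tpoly n) (s : seq (expo n)) (ei : expo n)
    (z : 'I_n -> sym) : sym -> Prop :=
  hsum [seq smul ((if e == ei then sneg else id) (sM (f e))) (smono z e)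
       | e <- s].

Definition Vtilde n (f : tpoly n) (s : seq (expo n)) (ei : expo n)
    (z : 'I_n -> sym) : Prop :=
  ftilde_eval f s ei z S0.

Definition HV n (f : tpoly n) (s : seq (expo n)) (z : 'I_n -> sym) : Prop :=
  exists2 ei, ei \in s & Vtilde f s ei z.

Definition tropVI n (I : tpoly n -> Prop) (a : 'I_n -> M) : Prop :=
  forall f, I f -> tropV f a.

Definition HVI n (I : tpoly n -> Prop) (z : 'I_n -> sym) : Prop :=
  forall f, I f -> f <> @tpzero n ->
    forall s, presentation f s -> HV f s z.

Definition Imphi n (z : 'I_n -> sym) : Prop := exists a, z = phi a.

From Stdlib Require Import Reals Lra Classical FunctionalExtensionality.
From mathcomp Require Import all_boot.

Set Implicit Arguments.
Unset Strict Implicit.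
Unset Printing Implicit Defensive.

(* At a point [phi a], every term of [f~_i] is [+/- s(value of a monomial of f)],
   and a hyper-sum contains [0] exactly when the terms of maximal modulus
   either vanish or occur with both signs.  Flipping the sign of one maximal
   monomial therefore gives [0 \in f~_i(phi a)] exactly when the maximum of
   the monomial values of [f] at [a] is attained twice (or is [-oo]), which is
   the condition [a \in trop(V(f))].  Intersecting over [f \in I] and using
   that [phi] is injective gives the bijection. *)

Lemma In_mapP (T : eqType) (U : Type) (t : T -> U) (l : seq T) y :
  List.In y [seq t x | x <- l] <-> exists2 x, x \in l & y = t x.
Proof.
elim: l => [|x l [IHl IHr]] /=; first by split=> [[]|[]].
split.
- case=> [<- | /IHl [x' x'_l ->]]; first by exists x; rewrite ?mem_head.
  by exists x'; rewrite // inE x'_l orbT.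
- case=> x'; rewrite inE => /orP [/eqP -> -> | x'_l y_eq]; first by left.
  by right; apply: IHr; exists x'.
Qed.

Lemma tle_refl x : tle x x.
Proof. by case: x => [a|] //=; apply: Rle_refl. Qed.

Lemma tle_trans x y z : tle x y -> tle y z -> tle x z.
Proof. by case: x => [a|]; case: y => [b|]; case: z => [c|] //=; lra. Qed.

Lemma tlt_tle x y : tlt x y -> tle x y.
Proof. by case: x => [a|]; case: y => [b|] //=; lra. Qed.

Lemma tle_tlt_trans x y z : tle x y -> tlt y z -> tlt x z.
Proof. by case: x => [a|]; case: y => [b|]; case: z => [c|] //=; lra. Qed.

Lemma tlt_irrefl x : ~ tlt x x.
Proof. by case: x => [a|] //=; lra. Qed.

Lemma tlt_asym x y : tlt x y -> ~ tlt y x.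
Proof. by case: x => [a|]; case: y => [b|] //=; lra. Qed.

Lemma tle_or_tlt x y : tle x y \/ tlt y x.
Proof.
case: x => [a|]; case: y => [b|] /=; try by [left | right].
exact: Rle_or_lt.
Qed.

Lemma tlt_trichotomy x y : tlt x y \/ x = y \/ tlt y x.
Proof.
case: x => [a|]; case: y => [b|] /=; try by [left | right; left | right; right].
by case: (Rtotal_order a b) => [|[->|]]; auto.
Qed.

Lemma tle_neq_tlt x y : tle x y -> x <> y -> tlt x y.
Proof.
case: x => [a|]; case: y => [b|] //= le_ab neq_ab; try by case: neq_ab.
by case: (Rle_lt_or_eq_dec _ _ le_ab) => // eq_ab; case: neq_ab; rewrite eq_ab.
Qed.

Lemma tle_None x : tle x None -> x = None.
Proof. by case: x. Qed.

Lemma seq_argmax (T : eqType) (g : T -> M) (s : seq T) :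
  s != [::] -> exists2 e1, e1 \in s & forall e, e \in s -> tle (g e) (g e1).
Proof.
elim: s => [//|x s IH] _; case: (altP (s =P [::])) => [-> | s_neq0].
  by exists x; rewrite ?mem_head // => e; rewrite inE => /eqP ->; apply: tle_refl.
have [e1 e1_s e1_max] := IH s_neq0.
case: (tle_or_tlt (g x) (g e1)) => [le_x | lt_x].
- exists e1; first by rewrite inE e1_s orbT.
  by move=> e; rewrite inE => /orP [/eqP -> | /e1_max].
- exists x; first exact: mem_head.
  move=> e; rewrite inE => /orP [/eqP -> | /e1_max le_e]; first exact: tle_refl.
  exact: tle_trans le_e (tlt_tle lt_x).
Qed.

Lemma sabs_sneg x : sabs (sneg x) = sabs x.
Proof. by case: x. Qed.

Lemma snegK : involutive sneg.
Proof. by case=> [|a p] //=; rewrite negbK. Qed.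

Lemma sneg_neq x b : sabs x = Some b -> sneg x <> x.
Proof. by case: x => [|a []]. Qed.

Lemma sabs_eq x y : sabs y = sabs x -> y = x \/ y = sneg x.
Proof.
case: x => [|a p]; case: y => [|b q] //=; first by left.
by move=> [->]; case: p; case: q; auto.
Qed.

Lemma tle_sabs_cases x y :
  tle (sabs y) (sabs x) -> y <> sneg x -> y = x \/ tlt (sabs y) (sabs x).
Proof.
move=> le_yx neq_y; case: (classic (sabs y = sabs x)) => [/sabs_eq|neq_abs].
- by case=> // ->; left.
- by right; apply: tle_neq_tlt.
Qed.

Lemma hadd_idem x : hadd x x x.
Proof. by left; split; [right|]. Qed.

Lemma hadd_absorbl x y : tlt (sabs y) (sabs x) -> hadd x y x.
Proof. by left; split; [left|]. Qed.

Lemma hadd_absorbr x y : tlt (sabs x) (sabs y) -> hadd x y y.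
Proof. by right; left. Qed.

Lemma hadd_opp x z : tle (sabs z) (sabs x) -> hadd x (sneg x) z.
Proof. by right; right. Qed.

Lemma hadd_total x y : exists z, hadd x y z.
Proof.
case: (tlt_trichotomy (sabs x) (sabs y)) => [lt_xy|[/esym/sabs_eq eq_xy|lt_yx]].
- by exists y; apply: hadd_absorbr.
- by case: eq_xy => ->; [exists x; apply: hadd_idem | exists S0; apply: hadd_opp].
- by exists x; apply: hadd_absorbl.
Qed.

Lemma hadd_dominantl x y z : tlt (sabs y) (sabs x) -> hadd x y z -> z = x.
Proof.
move=> lt_yx [[_ ->] // | [[lt_xy _] | [y_opp _]]].
- by case: (tlt_asym lt_yx lt_xy).
- by move: lt_yx; rewrite y_opp sabs_sneg => /tlt_irrefl.
Qed.

Lemma hadd_dominantr x y z : tlt (sabs x) (sabs y) -> hadd x y z -> z = y.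
Proof.
move=> lt_xy [[[lt_yx|eq_xy] _] | [[_ ->] // | [y_opp _]]].
- by case: (tlt_asym lt_xy lt_yx).
- by move: lt_xy; rewrite eq_xy => /tlt_irrefl.
- by move: lt_xy; rewrite y_opp sabs_sneg => /tlt_irrefl.
Qed.

Lemma hadd_lt x y z c :
  tlt (sabs x) c -> tlt (sabs y) c -> hadd x y z -> tlt (sabs z) c.
Proof.
by move=> lt_x lt_y [[_ ->] | [[_ ->] | [_ le_zx]]] //; apply: tle_tlt_trans lt_x.
Qed.

Lemma hsum_nonempty (l : seq sym) : exists z, hsum l z.
Proof.
elim: l => [|x l [w sum_w]]; first by exists S0.
by have [z add_z] := hadd_total x w; exists z, w.
Qed.

Lemma hsum_S0 (l : seq sym) : (forall y, List.In y l -> y = S0) -> hsum l S0.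
Proof.
elim: l => [|x l IH] l_S0 //=; exists S0; split.
- by apply: IH => y y_l; apply: l_S0; right.
- by rewrite (l_S0 x (or_introl erefl)); apply: hadd_idem.
Qed.

Lemma hsum_lt (l : seq sym) b z :
  (forall y, List.In y l -> tlt (sabs y) (Some b)) -> hsum l z ->
  tlt (sabs z) (Some b).
Proof.
elim: l z => [|x l IH] z l_lt /=; first by move=> ->.
case=> w [sum_w add_w]; apply: hadd_lt add_w; first exact: l_lt (or_introl erefl).
by apply: IH sum_w => y y_l; apply: l_lt; right.
Qed.

Lemma hsum_dominant (l1 l2 : seq sym) x b z :
  sabs x = Some b -> (forall y, List.In y (l1 ++ l2) -> tlt (sabs y) (Some b)) ->
  hsum (l1 ++ x :: l2) z -> z = x.
Proof.
move=> abs_x; elim: l1 z => [|y l1 IH] z l_lt /= [w [sum_w add_w]].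
- by apply: hadd_dominantl add_w; rewrite abs_x; apply: hsum_lt sum_w.
- have w_x : w = x by apply: IH sum_w => y' y'_l; apply: l_lt; right.
  rewrite w_x in add_w; apply: hadd_dominantr add_w.
  by rewrite abs_x; apply: l_lt; left.
Qed.

Lemma hsum_max_sign (l : seq sym) x b :
  List.In x l -> ~ List.In (sneg x) l -> sabs x = Some b ->
  (forall y, List.In y l -> tle (sabs y) (Some b)) -> hsum l x.
Proof.
elim: l => [|y l IH] //= x_l nx_l abs_x l_le.
have l_le' y' : List.In y' l -> tle (sabs y') (Some b) by move=> ?; apply: l_le; right.
have [y_x | lt_y] : y = x \/ tlt (sabs y) (sabs x).
  by apply: tle_sabs_cases; [rewrite abs_x; apply: l_le; left | move=> y_nx; apply: nx_l; left].
- case: (classic (List.In x l)) => [xl | xNl].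
    exists x; split; first by apply: IH => // nxl; apply: nx_l; right.
    by rewrite y_x; apply: hadd_idem.
  have l_lt y' : List.In y' l -> tlt (sabs y') (Some b).
    move=> y'_l; rewrite -abs_x.
    have [eq_y' | //] : y' = x \/ tlt (sabs y') (sabs x).
      apply: tle_sabs_cases; first by rewrite abs_x; apply: l_le'.
      by move=> eq_y'; apply: nx_l; right; rewrite -eq_y'.
    by case: xNl; rewrite -eq_y'.
  have [w sum_w] := hsum_nonempty l.
  exists w; split=> //; rewrite y_x; apply: hadd_absorbl.
  by rewrite abs_x; apply: hsum_lt sum_w.
- case: x_l => [x_y | xl].
    by move: lt_y; rewrite x_y => /tlt_irrefl.
  exists x; split; last exact: hadd_absorbr.
  by apply: IH => // nxl; apply: nx_l; right.
Qed.

Lemma hsum_max_cancel (l : seq sym) x b z :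
  List.In x l -> List.In (sneg x) l -> sabs x = Some b ->
  (forall y, List.In y l -> tle (sabs y) (Some b)) ->
  tle (sabs z) (Some b) -> hsum l z.
Proof.
elim: l x z => [|y l IH] x z //= x_l nx_l abs_x l_le le_z.
have l_le' y' : List.In y' l -> tle (sabs y') (Some b) by move=> ?; apply: l_le; right.
case: (classic (List.In x l)) => xl; case: (classic (List.In (sneg x) l)) => nxl.
- case: (tle_or_tlt (sabs z) (sabs y)) => [le_zy | lt_yz].
  + exists (sneg y); split; last exact: hadd_opp.
    by apply: (IH x) => //; rewrite sabs_sneg; apply: l_le; left.
  + by exists z; split; [apply: (IH x) | apply: hadd_absorbr].
- have y_nx : y = sneg x by case: nx_l => [| /nxl].
  exists x; split; first exact: hsum_max_sign xl nxl abs_x l_le'.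
  have := @hadd_opp (sneg x) z; rewrite snegK y_nx; apply.
  by rewrite sabs_sneg abs_x.
- have y_x : y = x by case: x_l => [| /xl].
  exists (sneg x); split; last by rewrite y_x; apply: hadd_opp; rewrite abs_x.
  by apply: (@hsum_max_sign _ _ b nxl); rewrite ?snegK ?sabs_sneg.
- case: x_l => // y_x; case: nx_l => // y_nx.
  by case: (sneg_neq abs_x); rewrite -y_nx.
Qed.

Lemma sabs_sM x : sabs (sM x) = x.
Proof. by case: x. Qed.

Lemma sM_mul x y : sM (tmul x y) = smul (sM x) (sM y).
Proof. by case: x => [a|]; case: y => [b|]. Qed.

Lemma smul_snegl x y : smul (sneg x) y = sneg (smul x y).
Proof. by case: x => [|a p]; case: y => [|b q] //=; case: p; case: q. Qed.

Lemma spow_sM x k : spow (sM x) k = sM (tpow x k).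
Proof. by elim: k => //= k IH; rewrite IH -sM_mul. Qed.

Lemma smono_phi n (a : 'I_n -> M) e : smono (phi a) e = sM (tmono a e).
Proof.
rewrite /smono /tmono (big_morph sM sM_mul (erefl _)).
by apply: eq_bigr => i _; rewrite spow_sM.
Qed.

Lemma phi_inj n : injective (@phi n).
Proof.
move=> a b eq_ab; apply: functional_extensionality => i.
by rewrite -(sabs_sM (a i)) -(sabs_sM (b i)); move/(congr1 (fun z => sabs (z i))): eq_ab.
Qed.

Definition ftilde_term n (f : tpoly n) (a : 'I_n -> M) (ei e : expo n) : sym :=
  (if e == ei then sneg else id) (sM (tval f a e)).

Lemma sabs_ftilde_term n (f : tpoly n) a ei e :
  sabs (ftilde_term f a ei e) = tval f a e.
Proof. by rewrite /ftilde_term; case: ifP; rewrite ?sabs_sneg sabs_sM. Qed.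

Lemma ftilde_eval_phi n (f : tpoly n) s ei a :
  ftilde_eval f s ei (phi a) = hsum [seq ftilde_term f a ei e | e <- s].
Proof.
congr hsum; apply: eq_map => e.
by rewrite smono_phi /ftilde_term /tval sM_mul; case: (e == ei); rewrite ?smul_snegl.
Qed.

Lemma tropV_of_HV_phi n (f : tpoly n) s a :
  presentation f s -> HV f s (phi a) -> tropV f a.
Proof.
move=> [s_uniq s_supp] [ei ei_s]; rewrite /Vtilde ftilde_eval_phi => zero_in.
have s_neq0 : s != [::] by case: s ei_s {s_uniq s_supp zero_in}.
have [e1 e1_s e1_max] := seq_argmax (tval f a) s_neq0.
case val_e1: (tval f a e1) => [b|]; last first.
  by left => e /s_supp /e1_max; rewrite val_e1 => /tle_None.
case: (classic (exists2 e2, e2 \in s & e2 != e1 /\ tval f a e2 = Some b)).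
  case=> e2 e2_s [/eqP neq_e21 val_e2]; right; exists e1, e2.
  split; first by move=> eq_e12; apply: neq_e21.
  split; first exact/s_supp.
  split; first exact/s_supp.
  by split; [rewrite val_e1 val_e2 | move=> e /s_supp /e1_max].
move=> no_tie; exfalso.
move: s_uniq zero_in e1_max no_tie; case/splitPr: e1_s => s1 s2.
rewrite -cat1s uniq_catCA cat1s cons_uniq => /andP [e1_fresh _] zero_in e1_max no_tie.
have below e : e \in s1 ++ s2 -> tlt (tval f a e) (Some b).
  have e_s : e \in s1 ++ s2 -> e \in s1 ++ e1 :: s2.
    by rewrite !mem_cat inE => /orP [-> | ->]; rewrite ?orbT.
  move=> e_s12; rewrite -val_e1; apply: tle_neq_tlt; first exact/e1_max/e_s.
  move=> tie; apply: no_tie; exists e; first exact: e_s.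
  by split; [apply: contraNneq e1_fresh => <- | rewrite tie].
rewrite map_cat /= in zero_in.
suff : S0 = ftilde_term f a ei e1.
  by move/(congr1 sabs); rewrite sabs_ftilde_term val_e1.
apply: (hsum_dominant (b := b)) zero_in; first by rewrite sabs_ftilde_term.
by move=> y; rewrite -map_cat => /In_mapP [e /below lt_e ->]; rewrite sabs_ftilde_term.
Qed.

Lemma HV_phi_of_tropV n (f : tpoly n) s a :
  presentation f s -> f <> @tpzero n -> tropV f a -> HV f s (phi a).
Proof.
move=> [_ s_supp] f_neq0 trop_a.
have all_vanish : (forall e, f e <> None -> tval f a e = None) -> HV f s (phi a).
  move=> vanish; have [e0 f_e0] : exists e0, f e0 <> None.
    apply: NNPP => no_mono; apply: f_neq0; apply: functional_extensionality => e.
    by apply: NNPP => f_e; apply: no_mono; exists e.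
  exists e0; first exact/s_supp.
  rewrite /Vtilde ftilde_eval_phi; apply: hsum_S0 => y /In_mapP [e /s_supp f_e ->].
  by rewrite /ftilde_term vanish //; case: ifP.
case: trop_a => [vanish | [e1 [e2 [neq_e12 [f_e1 [f_e2 [tie e1_max]]]]]]].
  exact: all_vanish.
case val_e1: (tval f a e1) => [b|]; last first.
  by apply: all_vanish => e /e1_max; rewrite val_e1 => /tle_None.
have e2_s : e2 \in s by apply/s_supp.
exists e1; first exact/s_supp.
rewrite /Vtilde ftilde_eval_phi.
apply: (hsum_max_cancel (x := ftilde_term f a e1 e1) (b := b)).
- by apply/In_mapP; exists e1 => //; apply/s_supp.
- apply/In_mapP; exists e2 => //.
  have /negPf neq_e21 : e2 != e1 by apply/eqP => eq_e21; apply: neq_e12.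
  by rewrite /ftilde_term eqxx neq_e21 snegK -tie val_e1.
- by rewrite sabs_ftilde_term.
- by move=> y /In_mapP [e /s_supp /e1_max]; rewrite val_e1 => le_e ->; rewrite sabs_ftilde_term.
- by [].
Qed.

Lemma presentation_of_finsupp n (f : tpoly n) :
  finsupp f -> exists s, presentation f s.
Proof.
move=> [s0 s0_supp]; exists (undup [seq e <- s0 | isSome (f e)]).
split=> [|e]; first exact: undup_uniq.
rewrite mem_undup mem_filter; split=> [/andP [] | f_e]; first by case: (f e).
by apply/andP; split; [case: (f e) f_e | apply: s0_supp].
Qed.

Theorem proposition4p18 (n : nat) (I : tpoly n -> Prop) (hI : is_ideal I) :
  (forall a, tropVI I a -> HVI I (phi a) /\ Imphi (phi a)) /\
  (forall a b, tropVI I a -> tropVI I b -> phi a = phi b -> a = b) /\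
  (forall z, HVI I z /\ Imphi z -> exists a, tropVI I a /\ phi a = z).
Proof.
split; [|split].
- move=> a trop_a; split; last by exists a.
  by move=> f I_f f_neq0 s pres_s; apply: HV_phi_of_tropV (trop_a f I_f).
- by move=> a b _ _; apply: phi_inj.
- move=> z [HV_z [a z_eq]]; subst z; exists a; split=> // f I_f.
  case: (classic (f = @tpzero n)) => [-> | f_neq0]; first by left.
  have [s pres_s] := presentation_of_finsupp (ideal_poly hI I_f).
  exact: tropV_of_HV_phi pres_s (HV_z _ I_f f_neq0 _ pres_s).
Qed.
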